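(* Assume the setting described in the context. Let $\lambda\in\mathbb{R}^F$ satisfy $$\lambda_f\ge\sum_{\sigma\in f:\,\sigma'\in A(f,\sigma)}\rho(\sigma'\mid f,\sigma)\frac{\omega(\sigma)}{\omega(\sigma')}\quad\text{for all }f\in F,\ \sigma'\in\Omega.$$ Let $W$ be a word and $\mathcal{X}$ a valid set of walks such that $W$ is a prefix of the word of every walk in $\mathcal{X}$. Then $$\sum_{\tau\in\mathcal{X}}p(\tau)\le\gamma^{\mathrm{init}}\cdot\lambda_W.$$
   Context: Setting: $\Omega$ is a finite set and $F$ a finite set of flaws, each a nonempty subset of $\Omega$; $F_\sigma=\{f:\sigma\in f\}$. For $\sigma\in\Omega$ and $f\in F_\sigma$ there is a probability distribution $\rho(\cdot\mid f,\sigma)$ on $\Omega$ with support $A(f,\sigma)$. $\omega$ is a probability distribution on $\Omega$ with $\omega(\sigma)>0$ for all $\sigma$, and $\omega^{\mathrm{init}}$ is a probability distribution on $\Omega$. Set $\gamma^{\mathrm{init}}=\max_\sigma\omega^{\mathrm{init}}(\sigma)/\omega(\sigma)$. A walk is a sequence $\tau=\sigma_1\xrightarrow{w_1}\sigma_2\cdots\xrightarrow{w_t}\sigma_{t+1}$ with $w_i\in F_{\sigma_i}$ and $\sigma_{i+1}\in A(w_i,\sigma_i)$. Its word is $w_1\ldots w_t$, and $$p(\tau)=\omega^{\mathrm{init}}(\sigma_1)\prod_{i=1}^t\rho(\sigma_{i+1}\mid w_i,\sigma_i).$$ A word is a finite sequence of flaws; for $W=w_1\ldots w_k$, $\lambda_W=\prod_i\lambda_{w_i}$.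 A word $W$ is a prefix of a word $U$ if $U=WU'$ for some word $U'$. A deterministic strategy assigns to each walk whose last state $\sigma$ is flawed a flaw in $F_\sigma$; a walk follows it if each $w_i$ is the flaw assigned to the prefix ending at $\sigma_i$. A set of walks is valid if all its walks follow one common deterministic strategy and no walk in it is a proper prefix of another (i.e., a walk $\tau$ is never an initial segment, different from $\tau'$, of some $\tau'$ in the set). *)

From HB Require Import structures.
From mathcomp Require Import all_boot all_order all_algebra.
Set Implicit Arguments. Unset Strict Implicit. Unset Printing Implicit Defensive.
Import Order.TTheory GRing.Theory Num.Theory.
Local Open Scope ring_scope.

(* Flaws are subsets of Omega; the flaw family is F : {set {set Omega}}.
   rho f s s' stands for rho(s' | f, s); A(f,s) is its support
   [set s' | 0 < rho f s s'].
   A walk  s_1 -w_1-> s_2 ... -w_t-> s_{t+1}  is encoded as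
   (s_1, [:: (w_1, s_2); ...; (w_t, s_{t+1})]). *)
Definition walk (Omega : finType) := (Omega * seq ({set Omega} * Omega))%type.

(* s_{i+1} (0-indexed: state t 0 = s_1) *)
Definition state (Omega : finType) (t : walk Omega) (i : nat) : Omega :=
  nth t.1 (t.1 :: map snd t.2) i.
(* the (i+1)-th step (w_{i+1}, s_{i+2}) *)
Definition step (Omega : finType) (t : walk Omega) (i : nat) : {set Omega} * Omega :=
  nth (set0, t.1) t.2 i.
Definition wlast (Omega : finType) (t : walk Omega) : Omega :=
  last t.1 (map snd t.2).
Definition word (Omega : finType) (t : walk Omega) : seq {set Omega} :=
  map fst t.2.

Definition is_walk (R : realFieldType) (Omega : finType) (F : {set {set Omega}})
    (rho : {set Omega} -> Omega -> Omega -> R) (t : walk Omega) : Prop :=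
  forall i, (i < size t.2)%N ->
    [/\ (step t i).1 \in F, state t i \in (step t i).1
      & 0 < rho (step t i).1 (state t i) (step t i).2].

Definition p_walk (R : realFieldType) (Omega : finType)
    (rho : {set Omega} -> Omega -> Omega -> R) (omega_init : Omega -> R)
    (t : walk Omega) : R :=
  omega_init t.1 * \prod_(i < size t.2) rho (step t i).1 (state t i) (step t i).2.

Definition is_strategy (Omega : finType) (F : {set {set Omega}})
    (S : walk Omega -> {set Omega}) : Prop :=
  forall t, [exists f in F, wlast t \in f] -> S t \in F /\ wlast t \in S t.

Definition follows (Omega : finType) (S : walk Omega -> {set Omega}) (t : walk Omega) : Prop :=
  forall i, (i < size t.2)%N -> S (t.1, take i t.2) = (step t i).1.

Definition proper_prefix (Omega : finType) (t t' : walk Omega) : Prop :=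
  [/\ t.1 = t'.1, prefix t.2 t'.2 & t.2 <> t'.2].

(* valid set of walks (X is a predicate on walks, possibly infinite) *)
Definition valid (R : realFieldType) (Omega : finType) (F : {set {set Omega}})
    (rho : {set Omega} -> Omega -> Omega -> R) (X : walk Omega -> Prop) : Prop :=
  exists S, [/\ is_strategy F S,
    (forall t, X t -> is_walk F rho t /\ follows S t)
  & (forall t t', X t -> X t' -> ~ proper_prefix t t')].

Definition gamma_init (R : realFieldType) (Omega : finType) (omega omega_init : Omega -> R) : R :=
  \big[Num.max/0]_(s : Omega) (omega_init s / omega s).

Definition lambda_word (R : realFieldType) (Omega : finType)
    (lambda : {set Omega} -> R) (W : seq {set Omega}) : R :=
  \prod_(f <- W) lambda f.

(* Cut every walk of X after its first |W| steps.  The walks of X follow one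
   deterministic strategy and none is a proper prefix of another, so the
   continuations of a fixed initial segment are leaves of a probability tree
   whose branchings are the distributions rho(.|f,sigma), the flaw f being forced
   by the strategy; hence their probabilities sum to at most 1.  All initial
   segments have word W.  Bounding omega_init by gamma_init * omega and peeling
   off the flaws of W from the right, the condition on lambda bounds the
   omega-weight of the segments ending at sigma' by lambda_W * omega(sigma');
   summing over sigma' with sum omega = 1 gives the claim. *)

From HB Require Import structures.
From mathcomp Require Import all_boot all_order all_algebra.
From mathcomp Require Import ring.
Import Order.TTheory GRing.Theory Num.Theory.
Set Implicit Arguments. Unset Strict Implicit. Unset Printing Implicit Defensive.
Local Open Scope ring_scope.

Lemma partition_big_undup (R : nmodType) (I J : eqType) (r : seq I)
    (key : I -> J) (g : I -> R) :
  \sum_(i <- r) g i = \sum_(j <- undup (map key r)) \sum_(i <- r | key i == j) g i.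
Proof.
rewrite (exchange_big_dep xpredT) //=; apply: eq_big_seq => i ir.
rewrite -big_filter (@eq_filter _ _ (pred1 (key i))) => [|j]; last exact: eq_sym.
by rewrite filter_pred1_uniq ?big_seq1 ?undup_uniq // mem_undup map_f.
Qed.

Section WalkEncoding.

Variable Omega : finType.
Implicit Types (x : Omega) (l : seq ({set Omega} * Omega)) (t : walk Omega).

Lemma step_cons x a l i :
  (i < size l)%N -> step (x, a :: l) i.+1 = step (a.2, l) i.
Proof. by move=> lti; rewrite /step /= (set_nth_default (set0, a.2)). Qed.

Lemma state_cons x a l i :
  (i <= size l)%N -> state (x, a :: l) i.+1 = state (a.2, l) i.
Proof. by move=> lei; rewrite /state /= (set_nth_default a.2) //= size_map ltnS. Qed.

Definition wtake n t : walk Omega := (t.1, take n t.2).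

Lemma wlast_rcons x l a : wlast (x, rcons l a) = a.2.
Proof. by rewrite /wlast /= map_rcons last_rcons. Qed.

End WalkEncoding.

Section Paths.

Variables (R : realFieldType) (Omega : finType) (F : {set {set Omega}}).
Variable rho : {set Omega} -> Omega -> Omega -> R.
Implicit Types (x : Omega) (l : seq ({set Omega} * Omega)) (t : walk Omega).

Fixpoint path_prob x l : R :=
  if l is a :: l' then rho a.1 x a.2 * path_prob a.2 l' else 1.

Fixpoint is_path x l : Prop :=
  if l is a :: l' then [/\ a.1 \in F, x \in a.1, 0 < rho a.1 x a.2 & is_path a.2 l']
  else True.

Lemma is_walkE t : is_walk F rho t <-> is_path t.1 t.2.
Proof.
case: t => x l /=; elim: l x => [|a l IH] x /=; first by split.
split=> [walk_al | [aF xa rho_a /IH walk_l] [|i] /= lti].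
- have [aF xa rho_a] := walk_al 0%N isT; split=> //; apply/IH => i lti.
  by have := walk_al i.+1 lti; rewrite step_cons // state_cons // ltnW.
- by split.
- by rewrite step_cons // state_cons //; [exact: walk_l | exact: ltnW].
Qed.

Lemma p_walkE (w : Omega -> R) t : p_walk rho w t = w t.1 * path_prob t.1 t.2.
Proof.
rewrite /p_walk; congr (_ * _); case: t => x l /=.
elim: l x => [|a l IH] x; first by rewrite big_ord0.
rewrite /= big_ord_recl -(IH a.2); congr (_ * _).
by apply: eq_bigr => i _; rewrite lift0 step_cons // state_cons // ltnW.
Qed.

Lemma is_path_cat x l1 l2 :
  is_path x (l1 ++ l2) <-> is_path x l1 /\ is_path (wlast (x, l1)) l2.
Proof.
elim: l1 x => [|a l IH] x /=; first by split=> // -[].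
by split=> [[? ? ? /IH[]] | [[? ? ? ?] ?]] //; split=> //; apply/IH.
Qed.

Lemma path_prob_cat x l1 l2 :
  path_prob x (l1 ++ l2) = path_prob x l1 * path_prob (wlast (x, l1)) l2.
Proof. by elim: l1 x => [|a l IH] x /=; rewrite ?mul1r // IH mulrA. Qed.

Lemma p_walk_cat (w : Omega -> R) x l1 l2 :
  p_walk rho w (x, l1 ++ l2) = p_walk rho w (x, l1) * path_prob (wlast (x, l1)) l2.
Proof. by rewrite !p_walkE path_prob_cat mulrA. Qed.

Lemma path_prob_ge0 x l : is_path x l -> 0 <= path_prob x l.
Proof.
by elim: l x => [|a l IH] x //= [_ _ /ltW rho_ge0 /IH]; apply: mulr_ge0.
Qed.

End Paths.

Lemma sum_sub_seq1_le (R : numDomainType) (T : eqType) (r : seq T) a (g : T -> R) :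
  uniq r -> 0 <= g a -> {subset r <= [:: a]} -> \sum_(t <- r) g t <= g a.
Proof.
move=> r_uniq ga_ge0 r_a; move: r_a (uniq_leq_size r_uniq r_a).
case: r {r_uniq} => [|t [|? ?]] // r_a _; first by rewrite big_nil.
by have /[!inE] /eqP -> := r_a t (mem_head _ _); rewrite big_seq1.
Qed.

Lemma walk_rcons_word (Omega : finType) (v : walk Omega) W f :
  word v = rcons W f -> let u := wtake (size v.2).-1 v in
  v = (u.1, rcons u.2 (f, wlast v)) /\ word u = W.
Proof.
case: v => x l; rewrite /word /wlast /=; case/lastP: l => [|l [g y]]; first by case: W.
have take_l : take (size l) (rcons l (g, y)) = l by rewrite -cats1 take_size_cat.
by rewrite !map_rcons last_rcons size_rcons /= take_l => /rcons_inj[<- <-].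
Qed.

Section PrefixFree.

Variables (R : realFieldType) (Omega : finType) (F : {set {set Omega}}).
Variable rho : {set Omega} -> Omega -> Omega -> R.
Hypothesis rho_ge0 : forall f s s', f \in F -> s \in f -> 0 <= rho f s s'.
Hypothesis rho_sum1 : forall f s, f \in F -> s \in f -> \sum_(s' : Omega) rho f s s' = 1.

Variables (P : walk Omega -> Prop) (S : walk Omega -> {set Omega}).
Hypothesis P_path : forall t, P t -> is_path F rho t.1 t.2 /\ follows S t.
Hypothesis P_prefix_free : forall t t', P t -> P t' -> ~ proper_prefix t t'.

Implicit Types (x : Omega) (l : seq ({set Omega} * Omega)) (Z : seq (walk Omega)).

Definition extensions_in x l Z :=
  forall t, t \in Z -> [/\ P t, t.1 = x & prefix l t.2].

Lemma extensions_of_member x l Z : uniq Z -> extensions_in x l Z ->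
  (x, l) \in Z -> \sum_(t <- Z) path_prob rho (wlast (x, l)) (drop (size l) t.2) = 1.
Proof.
move=> Z_uniq Z_ext xlZ; have [xlP _ _] := Z_ext _ xlZ.
rewrite (big_rem _ xlZ) /= drop_size /= big1_seq ?addr0 // => t /andP[_].
rewrite mem_rem_uniq // => /andP[/= t_neq tZ]; case: (Z_ext t tZ) => tP t1 l_t.
exfalso; apply: (P_prefix_free xlP tP); split=> //= tl.
by move: t_neq; rewrite -t1 tl; case: t {t1 l_t tZ tP tl} => ? ? /=; rewrite eqxx.
Qed.

Lemma extensions_longer x l Z t : extensions_in x l Z -> (x, l) \notin Z ->
  t \in Z -> (size l < size t.2)%N.
Proof.
move=> Z_ext xlZ tZ; have [_ t1 l_t] := Z_ext t tZ.
rewrite ltn_neqAle size_prefix // andbT; apply: contra xlZ => /eqP size_t.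
move: l_t; rewrite prefixE size_t take_size => /eqP tl.
by rewrite -t1 -tl; case: t tZ {t1 tl size_t}.
Qed.

Lemma extension_next_step x l t : P t -> t.1 = x -> prefix l t.2 ->
  (size l < size t.2)%N ->
  t.2 = rcons l (S (x, l), (step t (size l)).2) ++ drop (size l).+1 t.2.
Proof.
move=> tP t1 /[!prefixE] /eqP take_l longer; have [_ t_follows] := P_path tP.
rewrite -{1}(cat_take_drop (size l) t.2) (drop_nth (set0, t.1)) //.
rewrite cat_rcons take_l -[nth _ _ _]/(step t (size l)) [step _ _]surjective_pairing.
by rewrite -(t_follows _ longer) take_l t1.
Qed.

Lemma sum_extensions_le1 N x l Z : uniq Z -> extensions_in x l Z ->
  (forall t, t \in Z -> size t.2 <= size l + N)%N ->
  \sum_(t <- Z) path_prob rho (wlast (x, l)) (drop (size l) t.2) <= 1.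
Proof.
elim: N x l Z => [|N IH] x l Z Z_uniq Z_ext Z_size;
  have [xlZ|xlZ] := boolP ((x, l) \in Z);
  try by rewrite extensions_of_member.
  rewrite big1_seq ?ler01 // => t /andP[_ tZ].
  by have := Z_size t tZ; rewrite addn0 leqNgt (extensions_longer Z_ext).
case: Z => [|t0 Z'] in Z_uniq Z_ext Z_size xlZ *; first by rewrite big_nil ler01.
set Z := t0 :: Z' in Z_uniq Z_ext Z_size xlZ *; have t0Z : t0 \in Z := mem_head t0 Z'.
set f := S (x, l); set e := wlast (x, l).
pose next (t : walk Omega) := (step t (size l)).2.
have split_t t : t \in Z -> t.2 = rcons l (f, next t) ++ drop (size l).+1 t.2.
  move=> tZ; have [tP t1 l_t] := Z_ext t tZ.
  exact: extension_next_step tP t1 l_t (extensions_longer Z_ext xlZ tZ).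
have drop_t t : t \in Z -> drop (size l) t.2 = (f, next t) :: drop (size l).+1 t.2.
  by move=> tZ; rewrite {1}(split_t t tZ) cat_rcons drop_size_cat.
have [fF ef] : f \in F /\ e \in f.
  have [t0P t01 _] := Z_ext t0 t0Z.
  have [+ _] := P_path t0P; rewrite (split_t t0 t0Z) -cats1 -catA.
  by move=> /is_path_cat[_] /=; rewrite t01 => -[].
(* The next flaw of every extension is [f], so grouping by the next state
   splits the sum along the distribution rho(.|f,e). *)
rewrite (partition_big (P := xpredT) next xpredT) //= -(rho_sum1 fF ef); apply: ler_sum => y _.
rewrite big_seq_cond (eq_bigr (fun t => rho f e y * path_prob rho y (drop (size l).+1 t.2)));
  last by move=> t /andP[tZ /eqP <-]; rewrite drop_t.
rewrite -big_distrr -big_seq_cond -big_filter -[leRHS]mulr1 ler_wpM2l ?rho_ge0 //.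
have := IH x (rcons l (f, y)) [seq t <- Z | next t == y].
rewrite wlast_rcons size_rcons; apply; first exact: filter_uniq.
- move=> t; rewrite mem_filter => /andP[/eqP <- tZ]; have [tP t1 _] := Z_ext t tZ.
  by split=> //; rewrite (split_t t tZ) prefix_prefix.
- by move=> t; rewrite mem_filter addSnnS => /andP[_ /Z_size].
Qed.

Lemma sum_p_walk_le_wtake (w : Omega -> R) n Z : (forall x, 0 <= w x) -> uniq Z ->
  (forall t, t \in Z -> P t /\ (n <= size t.2)%N) ->
  \sum_(t <- Z) p_walk rho w t <= \sum_(u <- undup (map (wtake n) Z)) p_walk rho w u.
Proof.
move=> w_ge0 Z_uniq Z_P; rewrite (partition_big_undup _ (wtake n)) big_seq [leRHS]big_seq.
apply: ler_sum => _ /[!mem_undup] /mapP[t0 t0Z ->]; set u := wtake n t0.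
have [t0P n_le] := Z_P t0 t0Z; have size_u : size u.2 = n := size_takel n_le.
have wtakeK t : wtake n t = u -> t = (u.1, u.2 ++ drop n t.2).
  by case: t => x r <- /=; rewrite cat_take_drop.
have u_path : is_path F rho u.1 u.2.
  by have [] := P_path t0P; rewrite -(cat_take_drop n t0.2) => /is_path_cat[].
rewrite big_seq_cond (eq_bigr (fun t => p_walk rho w u *
    path_prob rho (wlast u) (drop (size u.2) t.2))); last first.
  by move=> t /andP[_ /eqP /wtakeK {1}->]; rewrite p_walk_cat size_u.
rewrite -big_distrr -big_seq_cond -big_filter -[leRHS]mulr1 ler_wpM2l //.
  by rewrite p_walkE mulr_ge0 // (path_prob_ge0 u_path).
apply: (@sum_extensions_le1 (\max_(t <- Z) size t.2)); first exact: filter_uniq.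
- move=> t /[!mem_filter] /andP[/eqP /wtakeK t_eq tZ]; have [tP _] := Z_P t tZ.
  by rewrite t_eq in tP *; split=> //; apply: prefix_prefix.
- move=> t /[!mem_filter] /andP[_ tZ]; apply: leq_trans (leq_addl _ _).
  exact: leq_bigmax_seq.
Qed.

End PrefixFree.

Section WordWeight.

Variables (R : realFieldType) (Omega : finType) (F : {set {set Omega}}).
Variable rho : {set Omega} -> Omega -> Omega -> R.
Hypothesis flaw_neq0 : forall f, f \in F -> f != set0.
Variables (omega : Omega -> R) (lambda : {set Omega} -> R).
Hypothesis omega_gt0 : forall s, 0 < omega s.
Hypothesis lambda_ge : forall f s', f \in F ->
  \sum_(s in f | 0 < rho f s s') rho f s s' * (omega s / omega s') <= lambda f.

Lemma lambda_word_ge0 W : all (mem F) W -> 0 <= lambda_word lambda W.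
Proof.
move=> /allP W_F; rewrite /lambda_word big_seq prodr_ge0 // => f /W_F fF.
have /set0Pn[s _] := flaw_neq0 fF; apply: le_trans (lambda_ge s fF).
apply: sumr_ge0 => s' /andP[_ /ltW rho_ge0'].
by rewrite mulr_ge0 // divr_ge0 // ltW.
Qed.

Lemma sum_rho_omega_le_lambda f s' c : f \in F -> 0 <= c ->
  \sum_(s in f | 0 < rho f s s') rho f s s' * (c * omega s) <= c * lambda f * omega s'.
Proof.
move=> fF c_ge0.
have -> : \sum_(s in f | 0 < rho f s s') rho f s s' * (c * omega s)
    = c * omega s' * \sum_(s in f | 0 < rho f s s') rho f s s' * (omega s / omega s').
  rewrite big_distrr /=; apply: eq_bigr => s _.
  by field; rewrite gt_eqF.
by rewrite [leRHS]mulrAC ler_wpM2l ?lambda_ge // mulr_ge0 // ltW.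
Qed.

Lemma sum_p_walk_nil_le (V : seq (walk Omega)) s' : uniq V ->
  (forall v, v \in V -> word v = [::]) ->
  \sum_(v <- V | wlast v == s') p_walk rho omega v <= omega s'.
Proof.
move=> V_uniq V_nil; rewrite -big_filter.
have -> : omega s' = p_walk rho omega (s', [::]) by rewrite p_walkE mulr1.
apply: sum_sub_seq1_le; rewrite ?filter_uniq ?p_walkE ?mulr1 ?ltW //.
move=> [x l] /[!mem_filter] /andP[/eqP /= <- /V_nil].
by case: l => // _; rewrite inE.
Qed.

Lemma sum_p_walk_word_le W (V : seq (walk Omega)) s' : all (mem F) W -> uniq V ->
  (forall v, v \in V -> is_path F rho v.1 v.2 /\ word v = W) ->
  \sum_(v <- V | wlast v == s') p_walk rho omega v <= lambda_word lambda W * omega s'.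
Proof.
elim/last_ind: W V s' => [|W f IH] V s' W_F V_uniq V_word.
  by rewrite /lambda_word big_nil mul1r; apply: sum_p_walk_nil_le => // v /V_word[].
move: W_F; rewrite all_rcons => /andP[fF W_F].
pose wb (v : walk Omega) := wtake (size v.2).-1 v.
set V1 := [seq v <- V | wlast v == s'].
have V1_split v : v \in V1 -> v = ((wb v).1, rcons (wb v).2 (f, s')) /\ word (wb v) = W.
  by rewrite mem_filter => /andP[/eqP <- /V_word[_ /walk_rcons_word]].
set V2 := map wb V1.
have V2_path u : u \in V2 ->
    [/\ is_path F rho u.1 u.2, word u = W, wlast u \in f & 0 < rho f (wlast u) s'].
  move=> /mapP[v vV1 ->]; have [v_eq wb_word] := V1_split v vV1.
  have [+ _] := V_word v (mem_subseq (filter_subseq _ _) vV1).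
  by rewrite [in is_path _ _ _ _]v_eq -cats1 => /is_path_cat[? /= [_ ? ? _]].
have V2_uniq : uniq V2.
  rewrite map_inj_in_uniq ?filter_uniq // => v v' vV1 v'V1 wb_eq.
  by rewrite (proj1 (V1_split v vV1)) (proj1 (V1_split v' v'V1)) wb_eq.
rewrite -big_filter.
have -> : \sum_(v <- V1) p_walk rho omega v
    = \sum_(u <- V2) p_walk rho omega u * rho f (wlast u) s'.
  rewrite big_map; apply: eq_big_seq => v /V1_split[v_eq _].
  by rewrite [in LHS]v_eq -cats1 p_walk_cat /= mulr1.
rewrite big_seq (partition_big (@wlast _) [pred s | (s \in f) && (0 < rho f s s')]) /=;
  last by move=> u /V2_path[_ _ -> ->].
apply: le_trans (_ : \sum_(s in f | 0 < rho f s s')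
    rho f s s' * (lambda_word lambda W * omega s) <= _).
  apply: ler_sum => s /andP[sf rho_gt0].
  rewrite (eq_bigr (fun u => rho f s s' * p_walk rho omega u)) => [|u /andP[_ /eqP ->]];
    last exact: mulrC.
  rewrite -big_distrr -big_seq_cond ler_pM2l //.
  by apply: IH => // u /V2_path[].
have -> : lambda_word lambda (rcons W f) = lambda_word lambda W * lambda f.
  by rewrite /lambda_word -cats1 big_cat big_seq1.
exact: sum_rho_omega_le_lambda (lambda_word_ge0 W_F).
Qed.

Lemma sum_p_walk_word_le_lambda W (V : seq (walk Omega)) :
  \sum_(s : Omega) omega s = 1 -> all (mem F) W -> uniq V ->
  (forall v, v \in V -> is_path F rho v.1 v.2 /\ word v = W) ->
  \sum_(v <- V) p_walk rho omega v <= lambda_word lambda W.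
Proof.
move=> omega_sum1 W_F V_uniq V_word.
rewrite (partition_big (P := xpredT) (@wlast _) xpredT) //=.
rewrite -[leRHS]mulr1 -omega_sum1 big_distrr ler_sum // => s _.
exact: sum_p_walk_word_le.
Qed.

End WordWeight.

Lemma le_gamma_init (R : realFieldType) (Omega : finType) (omega omega_init : Omega -> R) s :
  0 < omega s -> omega_init s <= gamma_init omega omega_init * omega s.
Proof. by move=> omega_gt0; rewrite -ler_pdivrMr //; apply: le_bigmax. Qed.

Unset Implicit Arguments.

Theorem theorem6 (R : realFieldType) (Omega : finType) (F : {set {set Omega}})
    (rho : {set Omega} -> Omega -> Omega -> R)
    (omega omega_init : Omega -> R) (lambda : {set Omega} -> R)
    (hF : forall f, f \in F -> f != set0)
    (hrho0 : forall f s s', f \in F -> s \in f -> 0 <= rho f s s')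
    (hrho1 : forall f s, f \in F -> s \in f -> \sum_(s' : Omega) rho f s s' = 1)
    (homega_pos : forall s, 0 < omega s)
    (homega1 : \sum_(s : Omega) omega s = 1)
    (hinit0 : forall s, 0 <= omega_init s)
    (hinit1 : \sum_(s : Omega) omega_init s = 1)
    (hlambda : forall f s', f \in F ->
       \sum_(s in f | 0 < rho f s s') rho f s s' * (omega s / omega s') <= lambda f)
    (W : seq {set Omega}) (hW : all (mem F) W)
    (X : walk Omega -> Prop) (hX : valid F rho X)
    (hpre : forall t, X t -> prefix W (word t)) :
  forall s : seq (walk Omega), uniq s -> (forall t, t \in s -> X t) ->
    \sum_(t <- s) p_walk rho omega_init t
      <= gamma_init omega omega_init * lambda_word lambda W.
Proof.
move=> s s_uniq s_X; have [S [_ X_walk X_prefix_free]] := hX.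
have X_path t : X t -> is_path F rho t.1 t.2 /\ follows S t.
  by move=> /X_walk[/is_walkE].
have s_long t : t \in s -> X t /\ (size W <= size t.2)%N.
  move=> /s_X Xt; split=> //; rewrite -(size_map fst t.2); exact/size_prefix/hpre.
set U := undup (map (wtake (size W)) s).
have U_word u : u \in U -> is_path F rho u.1 u.2 /\ word u = W.
  rewrite mem_undup => /mapP[t /s_X Xt ->]; have [+ _] := X_path t Xt.
  rewrite -(cat_take_drop (size W) t.2) => /is_path_cat[take_path _].
  by split=> //; rewrite /word /= map_take; apply/eqP; rewrite -prefixE hpre.
apply: le_trans (sum_p_walk_le_wtake hrho0 hrho1 X_path X_prefix_free hinit0 s_uniq s_long) _.
apply: le_trans (_ : \sum_(u <- U) gamma_init omega omega_init * p_walk rho omega u <= _).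
  rewrite big_seq [leRHS]big_seq ler_sum // => u /U_word[u_path _].
  rewrite !p_walkE mulrA ler_wpM2r ?(path_prob_ge0 u_path) //.
  exact: le_gamma_init.
rewrite -big_distrr ler_wpM2l ?bigmax_ge_id //.
exact: (sum_p_walk_word_le_lambda hF homega_pos hlambda homega1 hW (undup_uniq _) U_word).
Qed.
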